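(* For every integer $n\ge 1$, \[C_n=\sum_{k=0}^{n-1}\left(\binom{n-1}{k}^{2}-\binom{n+1}{k+2}\binom{n-3}{k-2}\right),\] where $C_n$ is the $n$th Catalan number and $\binom{a}{b}=0$ whenever $b<0$. *)

From mathcomp Require Import all_boot all_order all_algebra.
Set Implicit Arguments. Unset Strict Implicit. Unset Printing Implicit Defensive.
Import Order.TTheory GRing.Theory Num.Theory.
Local Open Scope ring_scope.

Definition catalan (n : nat) : nat := ('C(n.*2, n) %/ n.+1)%N.

(* Binomial coefficient with integer arguments: binom(a, b) = 0 when b < 0;
   for b >= 0 it is the generalized binomial a(a-1)...(a-b+1)/b!, i.e.
   'C(a, b) for a >= 0 and (-1)^b 'C(b - a - 1, b) for a < 0. *)
Definition binomz (a b : int) : int :=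
  match b with
  | Negz _ => 0
  | Posz b' =>
      match a with
      | Posz a' => ('C(a', b'))%:Z
      | Negz a' => (-1) ^+ b' * ('C(b' + a', b'))%:Z
      end
  end.

From mathcomp Require Import all_boot all_order all_algebra.
From mathcomp Require Import zify.
Import Order.TTheory GRing.Theory Num.Theory.
Local Open Scope ring_scope.

(* Both sums are Vandermonde convolutions: sum_k C(n-1,k)^2 = C(2n-2,n-1) and,
   after shifting k by 2, sum_k C(n+1,k+2) C(n-3,k-2) = C(2n-2,n+1), the terms
   with k < 2 vanishing because binom(a,b) = 0 for b < 0.  What remains is
   C_n = C(2n-2,n-1) - C(2n-2,n+1), which follows from Pascal's rule and the
   ratios between neighbouring binomial coefficients. *)

Lemma sum_binom_shift (a b c : nat) :
  (\sum_(0 <= k < b.+1) 'C(a, k + c) * 'C(b, k) = 'C(a + b, b + c))%N.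
Proof.
rewrite -binomial.Vandermonde -(big_mkord xpredT (fun j => 'C(a, j) * 'C(b, b + c - j)))%N.
rewrite [RHS](big_cat_nat (n := c)) //=; last by lia.
rewrite [X in _ = X + _]big_nat_cond [X in _ = X + _]big1 ?add0n; last first.
  by move=> j; rewrite andbT => /andP[_ ltjc]; rewrite (@bin_small b) ?muln0 //; lia.
rewrite -{2}(add0n c) big_addn -addSn addnK.
by apply: eq_big_nat => k /andP[_ ltkb]; rewrite subnDr bin_sub.
Qed.

Lemma mul_binom_central (m : nat) :
  (m.+2 * 'C(m.*2, m) = 'C(m.+1.*2, m.+1) + m.+2 * 'C(m.*2, m.+2))%N.
Proof.
case: m => [|m] //.
set c := 'C(m.+1.*2, m.+1); set d := 'C(m.+1.*2, m.+2).
have sym : 'C((m.+1.*2).+1, m.+1) = 'C((m.+1.*2).+1, m.+2).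
  rewrite -(bin_sub (n := (m.+1.*2).+1) (m := m.+1)); last by lia.
  by congr 'C(_, _); lia.
have pascal : 'C(m.+2.*2, m.+2) = (c + d).*2.
  by rewrite doubleS binS sym binS -/c -/d addnC addnn.
have dc : (m.+2 * d = m.+1 * c)%N by rewrite mul_bin_left; congr (_ * _)%N; lia.
have ed : (m.+3 * 'C(m.+1.*2, m.+3) = m * d)%N.
  by rewrite mul_bin_left; congr (_ * _)%N; lia.
rewrite pascal ed; lia.
Qed.

Lemma catalanS_binom (m : nat) : (catalan m.+1 + 'C(m.*2, m.+2) = 'C(m.*2, m))%N.
Proof.
have central := mul_binom_central m.
have le_e_c : ('C(m.*2, m.+2) <= 'C(m.*2, m))%N.
  by rewrite -(leq_pmul2l (ltn0Sn m.+1)) central leq_addl.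
rewrite /catalan (_ : 'C(m.+1.*2, m.+1) = m.+2 * ('C(m.*2, m) - 'C(m.*2, m.+2)))%N.
  by rewrite mulKn // subnK.
by rewrite mulnBr central addnK.
Qed.

Lemma binomz_neg (a b : int) : b < 0 -> binomz a b = 0.
Proof. by case: b. Qed.

Lemma sum_natz (n : nat) (F : nat -> nat) :
  \sum_(0 <= k < n) (F k)%:Z = (\sum_(0 <= k < n) F k)%N%:Z.
Proof. by rewrite -natz natr_sum; under eq_bigr do rewrite natz. Qed.

Lemma sum_binomz_sqr (m : nat) :
  \sum_(0 <= k < m.+1) binomz m%:Z k%:Z ^+ 2 = 'C(m.*2, m)%:Z.
Proof.
rewrite -addnn -[X in 'C(_, X)]addn0 -sum_binom_shift -sum_natz.
by apply: eq_bigr => k _; rewrite addn0 PoszM.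
Qed.

Lemma sum_binomz_shift2 (m : nat) :
  \sum_(0 <= k < m.+1) binomz (m%:Z + 2) (k%:Z + 2) * binomz (m%:Z - 2) (k%:Z - 2)
  = 'C(m.*2, m.+2)%:Z.
Proof.
rewrite big_nat_recl // (@binomz_neg _ (0%:Z - 2)) // mulr0 add0r.
case: m => [|[|p]]; first by rewrite big_geq.
  by rewrite big_nat1 (@binomz_neg _ (1%:Z - 2)) ?mulr0.
rewrite big_nat_recl // (@binomz_neg _ (1%:Z - 2)) // mulr0 add0r.
have -> : 'C(p.+2.*2, p.+4) = 'C(p + 4 + p, p + 4) by congr 'C(_, _); lia.
rewrite -sum_binom_shift -sum_natz; apply: eq_bigr => k _.
have -> : p.+2%:Z + 2 = (p + 4)%N%:Z by lia.
have -> : k.+2%:Z + 2 = (k + 4)%N%:Z by lia.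
have -> : p.+2%:Z - 2 = p%:Z by lia.
by have -> : k.+2%:Z - 2 = k%:Z by lia.
Qed.

Theorem mainTheorem7 (n : nat) (hn : (1 <= n)%N) :
  (catalan n)%:Z =
  \sum_(0 <= k < n)
     (binomz (n%:Z - 1) k%:Z ^+ 2
      - binomz (n%:Z + 1) (k%:Z + 2) * binomz (n%:Z - 3) (k%:Z - 2)).
Proof.
case: n hn => [|m] // _.
have -> : m.+1%:Z - 1 = m%:Z by lia.
have -> : m.+1%:Z + 1 = m%:Z + 2 by lia.
have -> : m.+1%:Z - 3 = m%:Z - 2 by lia.
by rewrite sumrB sum_binomz_sqr sum_binomz_shift2 -catalanS_binom PoszD addrK.
Qed.
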